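(* Let $\mathcal P$ be a path, $(p_1,\dots,p_m)$ an ordered list of plaquettes, and $(q_1,\dots,q_m)$ any permutation of it. Then for every configuration $\vec i$, $\theta_{\mathcal P}(\vec i,p_1,\dots,p_m)=\theta_{\mathcal P}(\vec i,q_1,\dots,q_m)$.
   Context: Let $\Lambda$ be a hexagonal (honeycomb) lattice embedded in a closed orientable surface, with one qubit on each edge. For an edge $j$, $\sigma^x_j,\sigma^z_j$ denote the Pauli operators on qubit $j$ and $n^{\pm}_j=\tfrac12(1\pm\sigma^z_j)$. A (string) configuration $\vec i$ is a computational basis state, viewed as a bit string assigning $0$ (empty) or $1$ (occupied) to each edge; $\vec i\oplus\vec\alpha$ is bitwise addition mod 2. For a hexagonal plaquette $p$, label its boundary edges $1,\dots,6$ cyclically (index $0$ means $6$) and its outgoing edges so that edge $12$ meets edges $6,1$; edge $7$ meets $1,2$; edge $8$ meets $2,3$; edge $9$ meets $3,4$; edge $10$ meets $4,5$; edge $11$ meets $5,6$. Define $B_p=\Big(\prod_{j=1}^6\sigma^x_j\Big)\Big(\prod_{j=1}^6(-1)^{n^-_{j-1}n^+_j}\Big)\,i^{n^-_{12}(n^-_1n^-_6-n^+_1n^+_6)}\,i^{n^-_7(n^+_1n^+_2-n^-_1n^-_2)}\,i^{n^+_8(n^-_2n^+_3-n^+_2n^-_3)}\,i^{n^-_9(n^-_3n^-_4-n^+_3n^+_4)}\,i^{n^-_{10}(n^+_4n^+_5-n^-_4n^-_5)}\,i^{n^+_{11}(n^-_5n^+_6-n^+_5n^-_6)}$; all $B_p$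 commute pairwise and square to the identity. Write $B_p=\prod_{j\in\partial p}\sigma^x_j\sum_{\vec i}b_p(\vec i)|\vec i\rangle\langle\vec i|$, defining the phase $b_p(\vec i)$. Let $\vec\alpha^p$ be the configuration occupied exactly on the boundary edges of $p$. For a path $\mathcal P$ (a sequence of edges forming a walk), $\vec\alpha^{\mathcal P}$ is the mod-2 sum of the indicators of its edges. Define $\theta_{\mathcal P}(\vec i,p_1,\dots,p_m)=\prod_{k=1}^m \frac{b_{p_k}(\vec i\oplus\vec\alpha^{\mathcal P}\oplus\bigoplus_{j<k}\vec\alpha^{p_j})}{b_{p_k}(\vec i\oplus\bigoplus_{j<k}\vec\alpha^{p_j})}$. *)

From HB Require Import structures.
From mathcomp Require Import all_boot all_order all_algebra all_field.
Set Implicit Arguments. Unset Strict Implicit. Unset Printing Implicit Defensive.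
Import Order.TTheory GRing.Theory Num.Theory.
Local Open Scope ring_scope.

(* Abstract hexagonal-lattice data:
   E  : the edges (one qubit per edge),
   Pl : the hexagonal plaquettes,
   lab p k : the edge of plaquette p carrying label k.+1 (k : 'I_12);
   labels 1..6 are the boundary edges (cyclic), 7..12 the outgoing edges,
   following the convention of the paper. *)

(* A string configuration: a bit (false = empty, true = occupied) per edge. *)
Definition config (E : finType) := {ffun E -> bool}.

Definition cxor (E : finType) (x y : config E) : config E :=
  [ffun e => x e (+) y e].

Definition edge_of (E Pl : finType) (lab : Pl -> 'I_12 -> E) (p : Pl) (k : nat) : E :=
  lab p (inord k.-1).

Definition alpha_plaq (E Pl : finType) (lab : Pl -> 'I_12 -> E) (p : Pl) : config E :=
  [ffun e => [exists k : 'I_12, (k < 6)%N && (lab p k == e)]].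

Definition alpha_path (E : finType) (P : seq E) : config E :=
  [ffun e => odd (count_mem e P)].

(* n^-_j = 1 iff edge j occupied (sigma^z = -1); n^+_j = 1 - n^-_j *)
Definition nm (E : finType) (i : config E) (e : E) : int := (i e : nat)%:Z.
Definition np (E : finType) (i : config E) (e : E) : int := 1 - nm i e.

Definition bphase (E Pl : finType) (lab : Pl -> 'I_12 -> E) (p : Pl) (i : config E)
  : algC :=
  let m k := nm i (edge_of lab p k) in
  let n k := np i (edge_of lab p k) in
  let prev j := if j == 1%N then 6%N else j.-1 in
  (\prod_(1 <= j < 7) (-1) ^ (m (prev j) * n j)) *
  ('i ^ (m 12%N * (m 1%N * m 6%N - n 1%N * n 6%N))) *
  ('i ^ (m 7%N * (n 1%N * n 2%N - m 1%N * m 2%N))) *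
  ('i ^ (n 8%N * (m 2%N * n 3%N - n 2%N * m 3%N))) *
  ('i ^ (m 9%N * (m 3%N * m 4%N - n 3%N * n 4%N))) *
  ('i ^ (m 10%N * (n 4%N * n 5%N - m 4%N * m 5%N))) *
  ('i ^ (n 11%N * (m 5%N * n 6%N - n 5%N * m 6%N))).

(* Operators on the span of configurations, as matrices indexed by configs:
   op j i = <j| A |i>. *)
Definition op (E : finType) := config E -> config E -> algC.

Definition opmul (E : finType) (A B : op E) : op E :=
  fun j i => \sum_(k : config E) A j k * B k i.

(* B_p = (prod_{j in dp} sigma^x_j) sum_i b_p(i)|i><i|, so
   <j|B_p|i> = b_p(i) [j = i (+) alpha^p]. *)
Definition Bop (E Pl : finType) (lab : Pl -> 'I_12 -> E) (p : Pl) : op E :=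
  fun j i => if j == cxor i (alpha_plaq lab p) then bphase lab p i else 0.

(* theta_P(i, p_1, ..., p_m) with running accumulators
   x = i (+) alpha^P (+) sum_{j<k} alpha^{p_j},  y = i (+) sum_{j<k} alpha^{p_j} *)
Fixpoint theta_rec (E Pl : finType) (lab : Pl -> 'I_12 -> E)
    (x y : config E) (ps : seq Pl) : algC :=
  match ps with
  | [::] => 1
  | p :: ps' => bphase lab p x / bphase lab p y *
      theta_rec lab (cxor x (alpha_plaq lab p)) (cxor y (alpha_plaq lab p)) ps'
  end.

Definition theta (E Pl : finType) (lab : Pl -> 'I_12 -> E)
    (P : seq E) (i : config E) (ps : seq Pl) : algC :=
  theta_rec lab (cxor i (alpha_path P)) i ps.

From HB Require Import structures.
From mathcomp Require Import all_boot all_order all_algebra all_field.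
Import GRing.Theory Num.Theory.
Local Open Scope ring_scope.

(* Since mod-2 addition of configurations is commutative, permuting the
   plaquettes does not change the final shifts, and the only thing to check is
   that two adjacent factors can be exchanged.  This reduces to the "phase
   cocycle" identity
       b_p(x + alpha^q) b_q(x) = b_q(x + alpha^p) b_p(x),
   which is exactly the diagonal matrix element <x+alpha^p+alpha^q| . |x> of
   B_p B_q = B_q B_p. *)

Lemma cxorAC (E : finType) (x a b : config E) :
  cxor (cxor x a) b = cxor (cxor x b) a.
Proof. by apply/ffunP => e; rewrite !ffunE addbAC. Qed.

Lemma opmul_Bop (E Pl : finType) (lab : Pl -> 'I_12 -> E) (p q : Pl)
    (j i : config E) :
  opmul (Bop lab p) (Bop lab q) j i =
  if j == cxor (cxor i (alpha_plaq lab q)) (alpha_plaq lab p)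
  then bphase lab p (cxor i (alpha_plaq lab q)) * bphase lab q i else 0.
Proof.
rewrite /opmul (bigD1 (cxor i (alpha_plaq lab q))) //= big1 ?addr0.
  by rewrite /Bop eqxx; case: ifP; rewrite ?mulr1 ?mul0r.
by move=> k /negbTE k_neq; rewrite /Bop k_neq mulr0.
Qed.

Lemma bphase_cocycle (E Pl : finType) (lab : Pl -> 'I_12 -> E)
    (Bcomm : forall p q j i,
       opmul (Bop lab p) (Bop lab q) j i = opmul (Bop lab q) (Bop lab p) j i)
    (p q : Pl) (x : config E) :
  bphase lab p (cxor x (alpha_plaq lab q)) * bphase lab q x =
  bphase lab q (cxor x (alpha_plaq lab p)) * bphase lab p x.
Proof.
have := Bcomm p q (cxor (cxor x (alpha_plaq lab q)) (alpha_plaq lab p)) x.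
by rewrite !opmul_Bop eqxx cxorAC eqxx.
Qed.

Section ThetaPermutation.
Variables (E Pl : finType) (lab : Pl -> 'I_12 -> E).

Hypothesis cocycle : forall (p q : Pl) (x : config E),
  bphase lab p (cxor x (alpha_plaq lab q)) * bphase lab q x =
  bphase lab q (cxor x (alpha_plaq lab p)) * bphase lab p x.

Arguments bphase : simpl never.

Lemma theta_rec_swap (x y : config E) (p q : Pl) (s : seq Pl) :
  theta_rec lab x y (p :: q :: s) = theta_rec lab x y (q :: p :: s).
Proof.
have merge2 : forall a b c d t : algC, a / b * (c / d * t) = (a * c) / (b * d) * t.
  by move=> a b c d t; rewrite mulrA mulf_div.
rewrite /= (cxorAC _ x) (cxorAC _ y) !merge2; congr (_ * _).
rewrite (mulrC (bphase lab p x)) (mulrC (bphase lab p y)).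
by rewrite -(cocycle p q x) -(cocycle p q y); congr (_ / _); apply: mulrC.
Qed.

Lemma theta_rec_move_front (x y : config E) (s : seq Pl) (p : Pl) :
  p \in s -> theta_rec lab x y s = theta_rec lab x y (p :: rem p s).
Proof.
elim: s x y => [//|a s IH] x y.
case: (eqVneq a p) => [<- _|a_neq_p]; first by rewrite /= eqxx.
rewrite inE eq_sym (negbTE a_neq_p) orFb => p_in_s.
have -> : rem p (a :: s) = a :: rem p s by rewrite /= (negbTE a_neq_p).
by rewrite theta_rec_swap /= (IH _ _ p_in_s).
Qed.

Lemma theta_rec_perm (ps qs : seq Pl) (x y : config E) :
  perm_eq ps qs -> theta_rec lab x y ps = theta_rec lab x y qs.
Proof.
elim: ps qs x y => [|p ps IH] qs x y pq.
  by move: pq; rewrite perm_sym => /perm_nilP ->.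
have p_in_qs : p \in qs by rewrite -(perm_mem pq) mem_head.
rewrite (theta_rec_move_front x y _ _ p_in_qs) /=; congr (_ * _); apply: IH.
by rewrite -(perm_cons p) (perm_trans pq) // perm_to_rem.
Qed.

End ThetaPermutation.

Theorem lemma1 (E Pl : finType) (lab : Pl -> 'I_12 -> E)
  (lab_inj : forall p, injective (lab p))
  (Bcomm : forall p q j i,
      opmul (Bop lab p) (Bop lab q) j i = opmul (Bop lab q) (Bop lab p) j i)
  (Bsq : forall p j i, opmul (Bop lab p) (Bop lab p) j i = (j == i)%:R)
  (P : seq E) (ps qs : seq Pl) (hperm : perm_eq ps qs) (i : config E) :
  theta lab P i ps = theta lab P i qs.
Proof.
have cocycle := bphase_cocycle _ _ _ Bcomm.
rewrite /theta; exact: (theta_rec_perm E Pl lab cocycle ps qs (cxor i (alpha_path P)) i hperm).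
Qed.
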